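(* Let $(\approx^n_1,\approx^n_2)$ be call-by-name coupled logical bisimilarity. (1) If $M\approx^n_1 N$ then $C[M]\approx^n_1 C[N]$ for every context $C$ such that $C[M],C[N]$ are closed. (2) If $E\approx^n_2 F$ then $\mathcal{E}[E]\approx^n_2\mathcal{E}[F]$ for every call-by-name evaluation context $\mathcal{E}$.
   Context: $\Lambda^\bullet$ is the set of closed $\lambda$-terms. Contexts are generated by $C::=x\mid[\cdot]\mid C\,C\mid\lambda x.C$, possibly with several holes numbered left to right; $C[\widetilde M]$ fills the $i$-th hole with $M_i$; $C[M]$ fills every hole with $M$. For $\mathcal{R}\subseteq\Lambda^\bullet\times\Lambda^\bullet$, $\mathcal{R}^\star=\{(C[\widetilde M],C[\widetilde N]) : C\text{ a context},\ M_i\,\mathcal{R}\,N_i\ \forall i,\ C[\widetilde M],C[\widetilde N]\in\Lambda^\bullet\}$. Call-by-name evaluation contexts: $\mathcal{E}::=[\cdot]\mid\mathcal{E}\,M$ with $M\in\Lambda^\bullet$. Call-by-name reduction on closed terms: $MN\longrightarrow M'N$ if $M\longrightarrow M'$, and $(\lambda x.P)N\longrightarrow P[N/x]$; $\Longrightarrow$ is its reflexive transitive closure. A coupled relation is a pair $(\mathcal{R}_1,\mathcal{R}_2)$ of relations on $\Lambda^\bullet$ with $\mathcal{R}_1\subseteq\mathcal{R}_2$. It is a (call-by-name) coupled logical bisimulation if whenever $M\,\mathcal{R}_2\,N$: (1) if $M\longrightarrow M'$ then there is $N'$ with $N\Longrightarrow N'$ and $M'\,\mathcal{R}_2\,N'$;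 (2) if $M=\lambda x.M'$ then $N\Longrightarrow\lambda x.N'$ for some $N'$ and for all $P,Q\in\Lambda^\bullet$ with $P\,\mathcal{R}_1^\star\,Q$, $M'[P/x]\,\mathcal{R}_2\,N'[Q/x]$; (3) the converses of (1),(2) with $M$ and $N$ exchanged. Coupled logical bisimilarity $(\approx^n_1,\approx^n_2)$ is the componentwise union of all such bisimulations. *)

(* Pure lambda calculus, locally nameless via de Bruijn indices
   (terms are thus identified up to alpha-conversion, as in the paper). *)
From Stdlib Require Import List Arith.
Import ListNotations.

Inductive term : Type :=
| Var : nat -> term
| App : term -> term -> term
| Lam : term -> term.

Fixpoint closed_at (k : nat) (t : term) : Prop :=
  match t with
  | Var n => n < k
  | App t1 t2 => closed_at k t1 /\ closed_at k t2
  | Lam t1 => closed_at (S k) t1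
  end.
Definition closed (t : term) : Prop := closed_at 0 t.

Fixpoint lift (d c : nat) (t : term) : term :=
  match t with
  | Var n => if n <? c then Var n else Var (n + d)
  | App t1 t2 => App (lift d c t1) (lift d c t2)
  | Lam t1 => Lam (lift d (S c) t1)
  end.

(* subst t k s : replace index k in t by s, decrementing indices above k *)
Fixpoint subst (t : term) (k : nat) (s : term) : term :=
  match t with
  | Var n => if n =? k then lift k 0 s
             else if k <? n then Var (n - 1) else Var n
  | App t1 t2 => App (subst t1 k s) (subst t2 k s)
  | Lam t1 => Lam (subst t1 (S k) s)
  end.

(* M'[P/x] where M = \x.M' : instantiate the bound variable of the body *)
Definition inst (body P : term) : term := subst body 0 P.

Inductive step : term -> term -> Prop :=
| step_app : forall M M' N, step M M' -> step (App M N) (App M' N)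
| step_beta : forall P N, step (App (Lam P) N) (inst P N).

Definition steps : term -> term -> Prop := Relation_Operators.clos_refl_trans term step.

(* multi-hole contexts C ::= x | [.] | C C | \x.C ; holes numbered left to right *)
Inductive ctx : Type :=
| CVar : nat -> ctx
| CHole : ctx
| CApp : ctx -> ctx -> ctx
| CLam : ctx -> ctx.

Fixpoint nholes (C : ctx) : nat :=
  match C with
  | CVar _ => 0
  | CHole => 1
  | CApp C1 C2 => nholes C1 + nholes C2
  | CLam C1 => nholes C1
  end.

Fixpoint fill_aux (C : ctx) (l : list term) : term * list term :=
  match C with
  | CVar n => (Var n, l)
  | CHole => match l with
             | [] => (Var 0, [])   (* never used: lengths are checked *)
             | M :: l' => (M, l')
             end
  | CApp C1 C2 => let (t1, l1) := fill_aux C1 l in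
                  let (t2, l2) := fill_aux C2 l1 in (App t1 t2, l2)
  | CLam C1 => let (t1, l1) := fill_aux C1 l in (Lam t1, l1)
  end.

Definition fill (C : ctx) (l : list term) : term := fst (fill_aux C l).

Fixpoint fill1 (C : ctx) (M : term) : term :=
  match C with
  | CVar n => Var n
  | CHole => M
  | CApp C1 C2 => App (fill1 C1 M) (fill1 C2 M)
  | CLam C1 => Lam (fill1 C1 M)
  end.

Definition rel := term -> term -> Prop.

Definition on_closed (R : rel) : Prop :=
  forall M N, R M N -> closed M /\ closed N.

Definition star (R : rel) : rel := fun M N =>
  exists (C : ctx) (Ms Ns : list term),
    length Ms = nholes C /\ length Ns = nholes C /\
    Forall2 R Ms Ns /\ M = fill C Ms /\ N = fill C Ns /\
    closed M /\ closed N.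

Definition coupled (R1 R2 : rel) : Prop :=
  on_closed R1 /\ on_closed R2 /\ (forall M N, R1 M N -> R2 M N).

Definition lb_progress (R1 R2 : rel) (M N : term) : Prop :=
  (forall M', step M M' -> exists N', steps N N' /\ R2 M' N') /\
  (forall M', M = Lam M' ->
     exists N', steps N (Lam N') /\
       forall P Q, star R1 P Q -> R2 (inst M' P) (inst N' Q)).

Definition coupled_logical_bisim (R1 R2 : rel) : Prop :=
  coupled R1 R2 /\
  forall M N, R2 M N -> lb_progress R1 R2 M N /\ lb_progress (fun x y => R1 y x) (fun x y => R2 y x) N M.

(* coupled logical bisimilarity (approx^n_1, approx^n_2): componentwise union *)
Definition bisim1 : rel := fun M N =>
  exists R1 R2, coupled_logical_bisim R1 R2 /\ R1 M N.
Definition bisim2 : rel := fun M N =>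
  exists R1 R2, coupled_logical_bisim R1 R2 /\ R2 M N.

(* call-by-name evaluation contexts E ::= [.] | E M (M closed):
   represented by the list of closed arguments, E[t] = t M1 ... Mk *)
Definition efill (args : list term) (t : term) : term :=
  fold_left App args t.

(* Given a coupled logical bisimulation (R1, R2), enlarge it to the pair
   (K1, K2) where K1 is the compatible closure of R1 restricted to closed terms,
   and K2 adds to K1 all pairs (E[P], E'[Q]) with P R2 Q and the arguments of
   the evaluation contexts E, E' pairwise in K1.  A step of a K1-pair either happens inside an R1-pair
   (handled by R1 ⊆ R2 and the bisimulation clauses of R2) or is a beta-step
   [(λx.a) c -> a[c/x]], and substitution preserves the compatible closure.  A
   step of E[P] either reduces P, or consumes the first argument of E with the
   abstraction clause for R2; that clause may be used because K1^* = K1.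
   Both parts of the theorem follow, since C[M] K1 C[N] and E[E0] K2 E[F0]. *)
From Stdlib Require Import List Arith Lia Relations.
Import ListNotations.

Lemma closed_at_weaken t k j : closed_at k t -> k <= j -> closed_at j t.
Proof.
  revert k j; induction t; simpl; intros k j Ht Hkj.
  - lia.
  - destruct Ht; split; eauto.
  - apply (IHt (S k)); auto; lia.
Qed.

Lemma closed_closed_at t k : closed t -> closed_at k t.
Proof. intro H; apply (closed_at_weaken t 0); auto; lia. Qed.

Lemma lift_closed_at t d c : closed_at c t -> lift d c t = t.
Proof.
  revert c; induction t; simpl; intros c Ht.
  - destruct (Nat.ltb_spec n c); auto; lia.
  - destruct Ht; rewrite IHt1, IHt2; auto.
  - rewrite IHt; auto.
Qed.

Lemma subst_closed_at t k s : closed_at k t -> subst t k s = t.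
Proof.
  revert k; induction t; simpl; intros k Ht.
  - destruct (Nat.eqb_spec n k); [lia|].
    destruct (Nat.ltb_spec k n); auto; lia.
  - destruct Ht; rewrite IHt1, IHt2; auto.
  - rewrite IHt; auto.
Qed.

Lemma closed_at_subst t k s :
  closed_at (S k) t -> closed s -> closed_at k (subst t k s).
Proof.
  revert k; induction t; simpl; intros k Ht Hs.
  - destruct (Nat.eqb_spec n k).
    + rewrite lift_closed_at by exact Hs. apply closed_closed_at, Hs.
    + destruct (Nat.ltb_spec k n); simpl; lia.
  - destruct Ht; split; auto.
  - apply IHt; auto.
Qed.

Lemma closed_inst body s : closed_at 1 body -> closed s -> closed (inst body s).
Proof. apply closed_at_subst. Qed.

Inductive compat (R : rel) : rel :=
| compat_var n : compat R (Var n) (Var n)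
| compat_base M N : R M N -> compat R M N
| compat_app a b c d :
    compat R a b -> compat R c d -> compat R (App a c) (App b d)
| compat_lam a b : compat R a b -> compat R (Lam a) (Lam b).

Lemma compat_refl R t : compat R t t.
Proof. induction t; [apply compat_var|apply compat_app|apply compat_lam]; auto. Qed.

Lemma compat_transpose R x y :
  compat R x y -> compat (fun a b => R b a) y x.
Proof.
  induction 1;
    [apply compat_var|apply compat_base|apply compat_app|apply compat_lam]; auto.
Qed.

Lemma compat_fill1 R M N C :
  compat R M N -> compat R (fill1 C M) (fill1 C N).
Proof.
  induction C; simpl; intros;
    [apply compat_var|auto|apply compat_app|apply compat_lam]; auto.
Qed.

(* The terms of R being closed, substitution only acts on the context part. *)
Lemma compat_subst R (HR : on_closed R) a b :
  compat R a b -> forall k U V, closed U -> closed V -> compat R U V ->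
  compat R (subst a k U) (subst b k V).
Proof.
  induction 1 as [n|M N HMN|a b c d _ IHab _ IHcd|a b _ IH];
    intros k U V HU HV HUV; simpl.
  - destruct (n =? k).
    + rewrite !lift_closed_at by assumption; auto.
    + destruct (k <? n); apply compat_var.
  - destruct (HR _ _ HMN) as [HM HN].
    rewrite !subst_closed_at by (apply closed_closed_at; assumption).
    apply compat_base, HMN.
  - apply compat_app; auto.
  - apply compat_lam; auto.
Qed.

Lemma fill_aux_app C Ms rest :
  length Ms = nholes C -> fill_aux C (Ms ++ rest) = (fill C Ms, rest).
Proof.
  assert (Hnil : forall C Ms, (forall rest, length Ms = nholes C ->
            fill_aux C (Ms ++ rest) = (fill C Ms, rest)) ->
          length Ms = nholes C -> fill_aux C Ms = (fill C Ms, [])).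
  { intros C' Ms' H HMs. rewrite <- (app_nil_r Ms') at 1. auto. }
  revert Ms rest; induction C; simpl; intros Ms rest HMs.
  - destruct Ms; simpl in *; [reflexivity|lia].
  - destruct Ms as [|M [|]]; simpl in *; try lia; reflexivity.
  - set (Ms1 := firstn (nholes C1) Ms); set (Ms2 := skipn (nholes C1) Ms).
    assert (H1 : length Ms1 = nholes C1) by (unfold Ms1; rewrite length_firstn; lia).
    assert (H2 : length Ms2 = nholes C2) by (unfold Ms2; rewrite length_skipn; lia).
    rewrite <- (firstn_skipn (nholes C1) Ms); fold Ms1 Ms2.
    unfold fill; simpl.
    rewrite <- app_assoc, !IHC1 by exact H1.
    rewrite IHC2 by exact H2. rewrite (Hnil C2 Ms2) by auto. reflexivity.
  - unfold fill; simpl. rewrite IHC by exact HMs.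
    rewrite (Hnil C Ms) by auto. reflexivity.
Qed.

Lemma fill_CApp C1 C2 Ms1 Ms2 :
  length Ms1 = nholes C1 -> length Ms2 = nholes C2 ->
  fill (CApp C1 C2) (Ms1 ++ Ms2) = App (fill C1 Ms1) (fill C2 Ms2).
Proof.
  intros H1 H2. unfold fill at 1; simpl. rewrite fill_aux_app by exact H1.
  rewrite <- (app_nil_r Ms2) at 1. rewrite fill_aux_app by exact H2.
  reflexivity.
Qed.

Lemma fill_CLam C Ms : fill (CLam C) Ms = Lam (fill C Ms).
Proof. unfold fill; simpl. destruct (fill_aux C Ms); reflexivity. Qed.

Lemma compat_fill_inv R x y : compat R x y ->
  exists C Ms Ns, length Ms = nholes C /\ length Ns = nholes C /\
    Forall2 R Ms Ns /\ x = fill C Ms /\ y = fill C Ns.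
Proof.
  induction 1 as [n|M N HMN|a b c d _ IHab _ IHcd|a b _ IH].
  - exists (CVar n), [], []. repeat split; auto.
  - exists CHole, [M], [N]. repeat split; auto.
  - destruct IHab as (C1 & Ms1 & Ns1 & ? & ? & ? & -> & ->).
    destruct IHcd as (C2 & Ms2 & Ns2 & ? & ? & ? & -> & ->).
    exists (CApp C1 C2), (Ms1 ++ Ms2), (Ns1 ++ Ns2). simpl; rewrite !length_app.
    repeat split; try lia; try apply Forall2_app; auto; symmetry; apply fill_CApp; auto.
  - destruct IH as (C & Ms & Ns & ? & ? & ? & -> & ->).
    exists (CLam C), Ms, Ns. repeat split; auto; symmetry; apply fill_CLam.
Qed.

Lemma compat_fill R C Ms Ns :
  length Ms = nholes C -> length Ns = nholes C -> Forall2 (compat R) Ms Ns ->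
  compat R (fill C Ms) (fill C Ns).
Proof.
  revert Ms Ns; induction C; simpl; intros Ms Ns HMs HNs HF.
  - destruct Ms, Ns; simpl in *; try lia. apply compat_var.
  - destruct Ms as [|M [|]], Ns as [|N [|]]; simpl in *; try lia.
    inversion HF; auto.
  - rewrite <- (firstn_skipn (nholes C1) Ms) in HF |- *.
    destruct (Forall2_app_inv_l _ _ HF) as (Ns1 & Ns2 & F1 & F2 & ->).
    pose proof (Forall2_length F1) as L1; pose proof (Forall2_length F2) as L2.
    rewrite length_firstn in L1; rewrite length_skipn in L2.
    rewrite !fill_CApp by (rewrite ?length_firstn, ?length_skipn; lia).
    apply compat_app; [apply IHC1|apply IHC2]; rewrite ?length_firstn, ?length_skipn; auto; lia.
  - rewrite !fill_CLam. apply compat_lam; auto.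
Qed.

Definition closed_compat (R : rel) : rel :=
  fun x y => compat R x y /\ closed x /\ closed y.

Lemma closed_compat_star R x y : closed_compat R x y -> star R x y.
Proof.
  intros (H & Hx & Hy).
  destruct (compat_fill_inv _ _ _ H) as (C & Ms & Ns & ? & ? & ? & -> & ->).
  exists C, Ms, Ns. repeat split; auto.
Qed.

Lemma star_closed_compat R x y : star (closed_compat R) x y -> closed_compat R x y.
Proof.
  intros (C & Ms & Ns & HMs & HNs & HF & -> & -> & Hx & Hy).
  split; [|auto]. apply compat_fill; auto.
  eapply Forall2_impl; [|exact HF]. intros a b [H _]; exact H.
Qed.

Lemma closed_compat_transpose R x y :
  closed_compat R x y -> closed_compat (fun a b => R b a) y x.
Proof. intros (H & Hx & Hy). split; [apply compat_transpose|]; auto. Qed.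

Lemma Forall2_closed_compat R As Bs :
  Forall2 (closed_compat R) As Bs -> Forall closed As /\ Forall closed Bs.
Proof. induction 1 as [|a b As Bs (_ & ? & ?) _ []]; auto. Qed.

Lemma star_mono (A B : rel) :
  (forall x y, A x y -> B x y) -> forall x y, star A x y -> star B x y.
Proof.
  intros H x y (C & Ms & Ns & ? & ? & F & ? & ? & ? & ?).
  exists C, Ms, Ns. repeat split; auto. eapply Forall2_impl; eauto.
Qed.

Lemma steps_app_l P Q A : steps P Q -> steps (App P A) (App Q A).
Proof.
  induction 1.
  - apply rt_step, step_app; auto.
  - apply rt_refl.
  - eapply rt_trans; eauto.
Qed.

Lemma steps_efill As P Q : steps P Q -> steps (efill As P) (efill As Q).
Proof. revert P Q; induction As; simpl; auto using steps_app_l. Qed.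

Lemma efill_snoc As c P : efill (As ++ [c]) P = App (efill As P) c.
Proof. unfold efill. rewrite fold_left_app. reflexivity. Qed.

Lemma efill_Lam_inv As P M : efill As P = Lam M -> As = [] /\ P = Lam M.
Proof.
  revert P; induction As; simpl; intros P H; auto.
  destruct (IHAs _ H); discriminate.
Qed.

Lemma step_efill_inv As P X : step (efill As P) X ->
  (exists P', step P P' /\ X = efill As P') \/
  (exists P0 A As', P = Lam P0 /\ As = A :: As' /\ X = efill As' (inst P0 A)).
Proof.
  revert P; induction As as [|A As IH]; simpl; intros P H.
  - left; eauto.
  - destruct (IH _ H) as [(P' & Hs & ->)|(P0 & _ & _ & E & _)]; [|discriminate].
    inversion Hs; subst.
    + left; eauto.
    + right. do 3 eexists. repeat split.
Qed.

Lemma closed_efill As P : Forall closed As -> closed P -> closed (efill As P).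
Proof.
  revert P; induction As; simpl; intros P HAs HP; auto.
  inversion HAs; subst. apply IHAs; auto. split; auto.
Qed.

Definition ectx_closure (R1 R2 : rel) : rel := fun x y =>
  closed_compat R1 x y \/
  exists As Bs P Q, R2 P Q /\ Forall2 (closed_compat R1) As Bs /\
    x = efill As P /\ y = efill Bs Q.

Lemma ectx_closure_base R1 R2 x y : R2 x y -> ectx_closure R1 R2 x y.
Proof. intros H. right. exists [], [], x, y. repeat split; auto. Qed.

Lemma ectx_closure_app R1 R2 a b c d :
  ectx_closure R1 R2 a b -> closed_compat R1 c d ->
  ectx_closure R1 R2 (App a c) (App b d).
Proof.
  intros [(H & Ha & Hb)|(As & Bs & P & Q & HR & F & -> & ->)] (Hc & Hcc & Hcd).
  - left. split; [apply compat_app|split; split]; auto.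
  - right. exists (As ++ [c]), (Bs ++ [d]), P, Q. rewrite !efill_snoc.
    repeat split; auto. apply Forall2_app; auto. constructor; [split; auto|constructor].
Qed.

Lemma ectx_closure_transpose R1 R2 x y :
  ectx_closure R1 R2 x y ->
  ectx_closure (fun a b => R1 b a) (fun a b => R2 b a) y x.
Proof.
  intros [H|(As & Bs & P & Q & HR & F & -> & ->)].
  - left. apply closed_compat_transpose, H.
  - right. exists Bs, As, Q, P. repeat split; auto.
    clear HR. induction F; constructor; auto. apply closed_compat_transpose; auto.
Qed.

Lemma lb_progress_mono A B A' B' x y :
  (forall p q, star A' p q -> star A p q) -> (forall p q, B p q -> B' p q) ->
  lb_progress A B x y -> lb_progress A' B' x y.
Proof.
  intros HA HB [Hstep Hlam]. split.
  - intros M' Hs. destruct (Hstep _ Hs) as (N' & ? & ?). exists N'; auto.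
  - intros M' E. destruct (Hlam _ E) as (N' & ? & Hi). exists N'; auto.
Qed.

Lemma coupled_logical_bisim_transpose R1 R2 :
  coupled_logical_bisim R1 R2 ->
  coupled_logical_bisim (fun x y => R1 y x) (fun x y => R2 y x).
Proof.
  intros [[H1 [H2 Hinc]] H]. split; [split; [|split]|].
  - intros M N h. destruct (H1 _ _ h); auto.
  - intros M N h. destruct (H2 _ _ h); auto.
  - intros M N h. apply Hinc, h.
  - intros M N h. destruct (H _ _ h). split; assumption.
Qed.

Section Closure.

Variables R1 R2 : rel.
Hypothesis HLB : coupled_logical_bisim R1 R2.

Let closed_R1 : on_closed R1. Proof. apply HLB. Qed.
Let R1_R2 x y : R1 x y -> R2 x y. Proof. apply HLB. Qed.
Let progress_R2 x y : R2 x y -> lb_progress R1 R2 x y. Proof. apply HLB. Qed.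

Lemma closed_compat_beta a b c d :
  compat R1 a b -> closed (Lam a) -> closed (Lam b) -> closed_compat R1 c d ->
  closed_compat R1 (inst a c) (inst b d).
Proof.
  intros Hab Ha Hb (Hcd & Hc & Hd). split; [|split].
  - apply (compat_subst R1 closed_R1); auto.
  - apply closed_inst; auto.
  - apply closed_inst; auto.
Qed.

Lemma compat_step_simulation x y : closed_compat R1 x y ->
  forall x', step x x' -> exists y', steps y y' /\ ectx_closure R1 R2 x' y'.
Proof.
  intros (H & Hx & Hy). revert Hx Hy.
  induction H as [n|M N HMN|a b c d Hab IHab Hcd _|a b _ _];
    intros Hx Hy x' Hs.
  - inversion Hs.
  - destruct (proj1 (progress_R2 _ _ (R1_R2 _ _ HMN)) _ Hs) as (y' & ? & ?).
    exists y'. split; auto. apply ectx_closure_base; auto.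
  - destruct Hx as [Ha Hc], Hy as [Hb Hd].
    inversion Hs as [a0 a' c0 Ha'|a0 c0]; subst.
    + destruct (IHab Ha Hb _ Ha') as (b' & ? & ?). exists (App b' d). split.
      * apply steps_app_l; auto.
      * apply ectx_closure_app; auto. split; auto.
    + inversion Hab as [|M N HMN| |a1 b1 Hab1]; subst.
      * destruct (proj2 (progress_R2 _ _ (R1_R2 _ _ HMN)) _ eq_refl)
          as (N' & Hst & HI).
        exists (inst N' d). split.
        -- eapply rt_trans; [apply steps_app_l, Hst|]. apply rt_step, step_beta.
        -- apply ectx_closure_base, HI, closed_compat_star. split; auto.
      * exists (inst b1 d). split; [apply rt_step, step_beta|].
        left. apply closed_compat_beta; auto. split; auto.
  - inversion Hs.
Qed.

Lemma closed_compat_progress x y :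
  closed_compat R1 x y -> lb_progress (closed_compat R1) (ectx_closure R1 R2) x y.
Proof.
  intros Hxy. split; [apply compat_step_simulation, Hxy|].
  intros M' ->. destruct Hxy as (H & Hx & Hy).
  inversion H as [|M N HMN| |a b Hab]; subst.
  - destruct (proj2 (progress_R2 _ _ (R1_R2 _ _ HMN)) _ eq_refl) as (N' & ? & HI).
    exists N'. split; auto. intros U V HUV.
    apply ectx_closure_base, HI, closed_compat_star, star_closed_compat, HUV.
  - exists b. split; [apply rt_refl|]. intros U V HUV.
    left. apply closed_compat_beta; auto. apply star_closed_compat, HUV.
Qed.

Lemma efill_progress As Bs P Q :
  R2 P Q -> Forall2 (closed_compat R1) As Bs ->
  lb_progress (closed_compat R1) (ectx_closure R1 R2) (efill As P) (efill Bs Q).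
Proof.
  intros HPQ F. destruct (progress_R2 _ _ HPQ) as [Hstep Hlam]. split.
  - intros X Hs.
    destruct (step_efill_inv _ _ _ Hs)
      as [(P' & HP & ->)|(P0 & A & As' & -> & -> & ->)].
    + destruct (Hstep _ HP) as (Q' & ? & ?). exists (efill Bs Q'). split.
      * apply steps_efill; auto.
      * right. exists As, Bs, P', Q'. auto.
    + inversion F as [|? B ? Bs' HAB HF']; subst.
      destruct (Hlam _ eq_refl) as (N' & Hst & HI).
      exists (efill Bs' (inst N' B)). split.
      * eapply rt_trans; [apply steps_efill, Hst|]. simpl.
        apply steps_efill, rt_step, step_beta.
      * right. exists As', Bs', (inst P0 A), (inst N' B).
        repeat split; auto. apply HI, closed_compat_star, HAB.
  - intros M' E. apply efill_Lam_inv in E. destruct E as [-> ->].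
    inversion F; subst.
    destruct (Hlam _ eq_refl) as (N' & Hst & HI). exists N'. split; auto.
    intros U V HUV.
    apply ectx_closure_base, HI, closed_compat_star, star_closed_compat, HUV.
Qed.

Lemma ectx_closure_progress x y :
  ectx_closure R1 R2 x y -> lb_progress (closed_compat R1) (ectx_closure R1 R2) x y.
Proof.
  intros [H|(As & Bs & P & Q & HR & F & -> & ->)].
  - apply closed_compat_progress, H.
  - apply efill_progress; auto.
Qed.

End Closure.

Lemma ectx_closure_coupled_logical_bisim R1 R2 :
  coupled_logical_bisim R1 R2 ->
  coupled_logical_bisim (closed_compat R1) (ectx_closure R1 R2).
Proof.
  intros HLB. split; [split; [|split]|].
  - intros M N (_ & ? & ?); auto.
  - intros M N [(_ & ? & ?)|(As & Bs & P & Q & HR & F & -> & ->)]; auto.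
    destruct (Forall2_closed_compat _ _ _ F).
    destruct (proj1 (proj2 (proj1 HLB)) _ _ HR).
    split; apply closed_efill; auto.
  - intros; left; auto.
  - intros M N H. split; [apply ectx_closure_progress; auto|].
    eapply lb_progress_mono;
      [| |exact (ectx_closure_progress _ _ (coupled_logical_bisim_transpose _ _ HLB)
                   _ _ (ectx_closure_transpose _ _ _ _ H))].
    + apply star_mono. intros p q h. apply closed_compat_transpose, h.
    + intros p q h. exact (ectx_closure_transpose _ _ _ _ h).
Qed.

Theorem mainTheorem7 :
  (forall (M N : term) (C : ctx),
      bisim1 M N -> closed (fill1 C M) -> closed (fill1 C N) ->
      bisim1 (fill1 C M) (fill1 C N)) /\
  (forall (E F : term) (args : list term),
      Forall closed args ->
      bisim2 E F -> bisim2 (efill args E) (efill args F)).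
Proof.
  split.
  - intros M N C (R1 & R2 & HLB & HMN) HCM HCN.
    exists (closed_compat R1), (ectx_closure R1 R2).
    split; [apply ectx_closure_coupled_logical_bisim, HLB|].
    split; auto. apply compat_fill1, compat_base, HMN.
  - intros E F args Hargs (R1 & R2 & HLB & HEF).
    exists (closed_compat R1), (ectx_closure R1 R2).
    split; [apply ectx_closure_coupled_logical_bisim, HLB|].
    right. exists args, args, E, F. repeat split; auto.
    induction Hargs; constructor; auto. split; [apply compat_refl|auto].
Qed.
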